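(* Let $p$ be an odd prime and let $f:\mathbb{F}_{p^{2k}}\to\mathbb{F}_p$ satisfy Condition A with sign $\epsilon$. Let $D=\{x\in\mathbb{F}_{p^{2k}}^*: f(x)=0\}$. Then $D$ is a $(v,d,\lambda_1,\lambda_2)$ partial difference set in the additive group of $\mathbb{F}_{p^{2k}}$, where $v=p^{2k}$, $d=(p^k-\epsilon)(p^{k-1}+\epsilon)$, $\lambda_1=(p^{k-1}+\epsilon)^2-3\epsilon(p^{k-1}+\epsilon)+\epsilon p^k$, $\lambda_2=(p^{k-1}+\epsilon)p^{k-1}$. Consequently the Cayley graph on $\mathbb{F}_{p^{2k}}$ in which $x,y$ are adjacent iff $x-y\in D$ is a strongly regular graph with these parameters.
   Context: Let $\zeta_p$ be a primitive complex $p$-th root of unity and $\mathrm{tr}$ the absolute trace from $\mathbb{F}_{p^{2k}}$ to $\mathbb{F}_p$. For $f:\mathbb{F}_{p^{2k}}\to\mathbb{F}_p$ the Walsh transform is $\mathcal{W}_f(b)=\sum_{x\in\mathbb{F}_{p^{2k}}}\zeta_p^{f(x)+\mathrm{tr}(bx)}$. Condition A: $p$ is an odd prime and $f:\mathbb{F}_{p^{2k}}\to\mathbb{F}_p$ satisfies $f(0)=0$, $f(-x)=f(x)$ for all $x$; there is an integer $l$ with $\gcd(l-1,p-1)=1$ such that $f(\alpha x)=\alpha^l f(x)$ for all $\alpha\in\mathbb{F}_p$, $x\in\mathbb{F}_{p^{2k}}$; and there exist a constant $\epsilon\in\{1,-1\}$ and a function $f^*:\mathbb{F}_{p^{2k}}\to\mathbb{F}_p$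 such that $\mathcal{W}_f(b)=\epsilon p^k\zeta_p^{f^*(b)}$ for all $b\in\mathbb{F}_{p^{2k}}$. A $d$-subset $D$ of a finite abelian group $G$ (written additively, of order $v$) with $0\notin D$ is a $(v,d,\lambda,\mu)$ partial difference set (PDS) if every nonzero element of $D$ can be written as $g-h$ with $g,h\in D$ in exactly $\lambda$ ways, and every nonzero element of $G\setminus D$ can be written so in exactly $\mu$ ways. *)

From HB Require Import structures.
From mathcomp Require Import all_boot all_order all_algebra all_field.
Set Implicit Arguments. Unset Strict Implicit. Unset Printing Implicit Defensive.
Import Order.TTheory GRing.Theory Num.Theory.
Local Open Scope ring_scope.

(* Absolute trace F -> F_p, where F is a finite field of order p^n (n = 2k here):
   tr(x) = sum_{i<n} x^(p^i), an element of the prime subfield of F, transported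
   to 'F_p as the unique a : 'F_p whose image (val a)%:R in F equals it. *)
Definition abs_trace (F : finFieldType) (p n : nat) (x : F) : 'F_p :=
  odflt 0 [pick a : 'F_p | ((val a)%:R : F) == \sum_(i < n) x ^+ (p ^ i)%N].

Definition walsh (F : finFieldType) (p n : nat) (zeta : algC) (f : F -> 'F_p)
  (b : F) : algC :=
  \sum_(x : F) zeta ^+ (val (f x + @abs_trace F p n (b * x))).

Definition conditionA (F : finFieldType) (p k : nat) (zeta : algC)
  (f : F -> 'F_p) (eps : int) : Prop :=
  prime p /\ odd p /\ f 0 = 0 /\ (forall x, f (- x) = f x) /\
      (exists l : int, gcdz (l - 1) (p.-1)%:Z = 1%N /\
          forall (a : 'F_p) (x : F), f ((val a)%:R * x) = a ^ l * f x) /\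
      (eps = 1 \/ eps = -1) /\
      exists fstar : F -> 'F_p, forall b : F,
        @walsh F p (2 * k)%N zeta f b = eps%:~R * (p ^ k)%:R * zeta ^+ (val (fstar b)).

Definition is_PDS (G : finZmodType) (D : {set G}) (v d lam mu : int) : Prop :=
  [/\ #|G|%:Z = v, #|D|%:Z = d, (0 : G) \notin D &
      forall g : G, g != 0 ->
        #|[set xy : G * G | [&& xy.1 \in D, xy.2 \in D & xy.1 - xy.2 == g]]|%:Z
          = (if g \in D then lam else mu)].

Definition is_SRG (T : finType) (adj : rel T) (v d lam mu : int) : Prop :=
  [/\ #|T|%:Z = v, symmetric adj, irreflexive adj,
      (forall x, #|[set y | adj x y]|%:Z = d) &
      forall x y, x != y ->
        #|[set z | adj x z && adj y z]|%:Z = (if adj x y then lam else mu)].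

Definition cayley (G : finZmodType) (D : {set G}) : rel G :=
  fun x y => (x - y) \in D.

(* Let [psi] be the canonical additive character [x |-> zeta ^ tr x] of [F] and
   [hatD b = \sum_(x in D) psi (b x)]. Expanding the indicator of [f x = 0] as
   [p^-1 \sum_y zeta ^ (y f x)], reparametrising [y = a ^ (1 - l)] and substituting
   [x := a x], homogeneity of [f] turns the [y]-th term into the Galois conjugate
   [zeta |-> zeta ^ a] of the Walsh coefficient [W_f b = eps p^k zeta ^ f* b]. Hence
   [p (1 + hatD b) = p^(2k) [b = 0] + eps p^k (p [f* b = 0] - 1)]. Since [f] is even,
   all level sets of [f] except [f = 0] have even size, which forces [f* 0 = 0] and
   gives [#|D|]. For [b != 0], [hatD b] takes only two values, so [hatD b ^ 2] is affine
   in [hatD b]; Fourier inversion of the difference count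
   [p^(2k) #{(x, y) in D^2 | x - y = g} = \sum_b hatD b ^ 2 psi (- b g)] then yields
   [lambda] and [mu]. As [D = - D], its Cayley graph is strongly regular. *)

From HB Require Import structures.
From mathcomp Require Import all_boot all_order all_algebra all_field.
From mathcomp Require Import ring.
Import Order.TTheory GRing.Theory Num.Theory.
Set Implicit Arguments. Unset Strict Implicit. Unset Printing Implicit Defensive.
Local Open Scope ring_scope.

Section PrimeSubfield.
Variables (F : finFieldType) (p : nat).
Hypothesis pcharF : p \in [pchar F].

Let p_prime : prime p := pcharf_prime pcharF.

Definition Fp_embed (a : 'F_p) : F := (val a)%:R.

Lemma Fp_embed_nat m : Fp_embed m%:R = m%:R.
Proof.
by rewrite /Fp_embed -[val _]/(nat_of_ord _) val_Fp_nat // (GRing.natr_mod_pchar pcharF).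
Qed.

Lemma Fp_embed_is_nmod_morphism : nmod_morphism Fp_embed.
Proof.
split=> [|a b]; first by rewrite -[0]/(0%:R) Fp_embed_nat.
by rewrite -[a]natr_Zp -[b]natr_Zp -natrD !Fp_embed_nat natrD.
Qed.

Lemma Fp_embed_is_monoid_morphism : monoid_morphism Fp_embed.
Proof.
split=> [|a b]; first by rewrite -[1]/(1%:R) Fp_embed_nat.
by rewrite -[a]natr_Zp -[b]natr_Zp -natrM !Fp_embed_nat natrM.
Qed.

HB.instance Definition _ :=
  GRing.isNmodMorphism.Build 'F_p F Fp_embed Fp_embed_is_nmod_morphism.
HB.instance Definition _ :=
  GRing.isMonoidMorphism.Build 'F_p F Fp_embed Fp_embed_is_monoid_morphism.

Lemma Fp_embed_inj : injective Fp_embed. Proof. exact: fmorph_inj. Qed.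

Lemma Fp_embed_eq0 a : (Fp_embed a == 0) = (a == 0). Proof. exact: fmorph_eq0. Qed.

Lemma Fp_embed_frobenius a : Fp_embed a ^+ p = Fp_embed a.
Proof. by rewrite -rmorphXn -[X in _ ^+ X](card_Fp p_prime) expf_card. Qed.

(* The image of [Fp_embed] already has [p] elements, all roots of ['X^p - 'X]. *)
Lemma frobenius_fixed_Fp_embed (y : F) : y ^+ p = y -> exists a, Fp_embed a = y.
Proof.
move=> yp; pose S := [set z : F | z ^+ p == z].
pose I := [set Fp_embed a | a in 'F_p].
have sIS : I \subset S.
  by apply/subsetP => z /imsetP [a _ ->]; rewrite inE Fp_embed_frobenius.
have cardI : #|I| = p by rewrite card_imset ?card_Fp //; exact: Fp_embed_inj.
have cardS : (#|S| <= p)%N.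
  pose P : {poly F} := 'X^p - 'X.
  have sizeP : size P = p.+1.
    by rewrite size_addl ?size_polyXn // size_opp size_polyX ltnS prime_gt1.
  have P_neq0 : P != 0 by rewrite -size_poly_eq0 sizeP.
  rewrite -ltnS -sizeP cardE; apply: max_poly_roots (enum_uniq _) => //.
  by apply/allP => z; rewrite mem_enum inE /root !hornerE subr_eq0.
have /subset_cardP eqIS : #|I| = #|S| by apply/eqP; rewrite eqn_leq subset_leq_card // cardI.
have : y \in I by rewrite (eqIS sIS) inE yp.
by case/imsetP => a _ ->; exists a.
Qed.

End PrimeSubfield.

Arguments Fp_embed {F p}.

Section AbsoluteTrace.
Variables (F : finFieldType) (p n : nat).
Hypotheses (pcharF : p \in [pchar F]) (cardF : #|F| = (p ^ n)%N).

Let p_prime : prime p := pcharf_prime pcharF.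
Local Notation tr := (@abs_trace F p n).

Definition trace_sum (x : F) : F := \sum_(i < n) x ^+ (p ^ i).

Lemma trace_sum_frobenius x : trace_sum x ^+ p = trace_sum x.
Proof.
rewrite -(pFrobenius_autE pcharF) rmorph_sum /=.
under eq_bigr do rewrite pFrobenius_autE -exprM -expnSr.
(* Frobenius shifts the summands cyclically, as [x ^+ (p ^ n) = x]. *)
have := erefl (\sum_(i < n.+1) x ^+ (p ^ i)).
rewrite {1}big_ord_recl big_ord_recr /= -cardF expf_card expn0 expr1 addrC.
by move/addrI.
Qed.

Lemma abs_traceE x : Fp_embed (tr x) = trace_sum x.
Proof.
rewrite /abs_trace; case: pickP => [a /eqP //|no_a].
have [a ea] := frobenius_fixed_Fp_embed pcharF (trace_sum_frobenius x).
by have := no_a a; rewrite -[X in X == _]/(Fp_embed a) ea eqxx.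
Qed.

Lemma abs_traceD x y : tr (x + y) = tr x + tr y.
Proof.
apply: (Fp_embed_inj pcharF); rewrite rmorphD /= !abs_traceE -big_split.
by apply: eq_bigr => i _; apply: exprDn_pchar; rewrite pnatX (pnatE _ p_prime) pcharF.
Qed.

Lemma abs_trace0 : tr 0 = 0.
Proof. by apply: (addrI (tr 0)); rewrite -abs_traceD !addr0. Qed.

Lemma abs_traceZ a x : tr (Fp_embed a * x) = a * tr x.
Proof.
apply: (Fp_embed_inj pcharF); rewrite rmorphM /= !abs_traceE mulr_sumr.
apply: eq_bigr => i _; rewrite exprMn; congr (_ * _).
by elim: (i : nat) => [|j IH]; rewrite ?expr1 // expnSr exprM IH Fp_embed_frobenius.
Qed.

(* [trace_sum] is a nonzero polynomial function of degree [p ^ n.-1 < #|F|]. *)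
Lemma abs_trace_neq0 : (0 < n)%N -> exists w, tr w != 0.
Proof.
move=> n_gt0; apply/existsP/contraT; rewrite negb_exists => /forallP tr0.
pose P : {poly F} := \sum_(i < n) 'X^(p ^ i).
have last_i : (n.-1 < n)%N by rewrite prednK.
have P_neq0 : P != 0.
  apply/eqP => /(congr1 (fun P : {poly F} => P`_(p ^ n.-1))) /eqP.
  rewrite coef0 coef_sum (bigD1 (Ordinal last_i)) //= coefXn eqxx big1 ?addr0.
    by rewrite oner_eq0.
  move=> j; rewrite -val_eqE coefXn eqn_exp2l ?prime_gt1 //= eq_sym.
  by move/negPf ->.
have sizeP : (size P <= (p ^ n.-1).+1)%N.
  apply: leq_trans (size_sum _ _ _) _; apply/bigmax_leqP => i _.
  by rewrite size_polyXn ltnS leq_exp2l ?prime_gt1 // -ltnS prednK.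
have rootsP : all (root P) (enum F).
  apply/allP => x _; rewrite /root horner_sum.
  under eq_bigr do rewrite hornerXn.
  by rewrite -[\sum_(i < n) _]/(trace_sum x) -abs_traceE (eqP (negbNE (tr0 x))) rmorph0.
have := max_poly_roots P_neq0 rootsP (enum_uniq _).
rewrite -cardE cardF => /leq_trans /(_ sizeP); rewrite ltnS leqNgt ltn_exp2l ?prime_gt1 //.
by rewrite prednK // leqnn.
Qed.

End AbsoluteTrace.

Lemma sum_mul_char_eq0 (G : finZmodType) (R : idomainType) (chi : G -> R) c :
  {morph chi : x y / x + y >-> x * y} -> chi c != 1 -> \sum_x chi x = 0.
Proof.
move=> chiD chic_neq1.
have : \sum_x chi x = chi c * \sum_x chi x.
  by rewrite mulr_sumr (reindex_inj (addrI c)); apply: eq_bigr => x _; rewrite chiD.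
move/eqP; rewrite -subr_eq0 -{1}[\sum_x _]mul1r -mulrBl mulf_eq0 subr_eq0 eq_sym.
by rewrite (negPf chic_neq1) => /eqP.
Qed.

Lemma Fp_dvd_val p (a : 'F_p) : prime p -> (p %| val a)%N = (a == 0).
Proof. by move=> p_prime; rewrite (dvdn_pcharf (pchar_Fp p_prime)) natr_Zp. Qed.

Section AdditiveCharacter.
Variables (p : nat) (zeta : algC).
Hypotheses (p_prime : prime p) (zeta_prim : p.-primitive_root zeta).

Definition addchar (a : 'F_p) : algC := zeta ^+ val a.

Lemma addchar_nat m : addchar m%:R = zeta ^+ m.
Proof. by rewrite /addchar -[val _]/(nat_of_ord _) val_Fp_nat // prim_expr_mod. Qed.

Lemma addchar0 : addchar 0 = 1.
Proof. exact: expr0. Qed.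

Lemma addcharD a b : addchar (a + b) = addchar a * addchar b.
Proof. by rewrite -[a]natr_Zp -[b]natr_Zp -natrD !addchar_nat exprD. Qed.

Lemma addchar_eq1 a : (addchar a == 1) = (a == 0).
Proof.
by rewrite /addchar -(prim_order_dvd zeta_prim) Fp_dvd_val.
Qed.

Lemma sum_addchar_mul c :
  \sum_(y : 'F_p) addchar (y * c) = if c == 0 then p%:R else 0.
Proof.
have [->|c_neq0] := eqVneq c 0.
  by under eq_bigr do rewrite mulr0 addchar0; rewrite sumr_const card_Fp.
apply: (sum_mul_char_eq0 (c := c^-1)) => [a b|]; first by rewrite mulrDl addcharD.
by rewrite mulVf // addchar_eq1 oner_eq0.
Qed.

Lemma sum_addchar_mul_neq0 c :
  \sum_(y : 'F_p | y != 0) addchar (y * c) = if c == 0 then p%:R - 1 else -1.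
Proof.
have := sum_addchar_mul c; rewrite (bigD1 0) //= mul0r addchar0.
by move/(canRL (addKr 1)) ->; case: eqP; rewrite ?addr0 // addrC.
Qed.

Lemma addchar_galois a : a != 0 ->
  exists s : {rmorphism algC -> algC}, forall b, s (addchar b) = addchar (a * b).
Proof.
move=> a_neq0; have p_coprime_a : coprime (val a) p.
  by rewrite coprime_sym prime_coprime // Fp_dvd_val.
have [s sE] := Qn_aut_exists p_coprime_a; exists s => b.
rewrite /addchar rmorphXn sE ?(prim_expr_order zeta_prim) // -exprM.
by rewrite -[LHS]addchar_nat natrM !natr_Zp.
Qed.

End AdditiveCharacter.

Section TraceCharacter.
Variables (F : finFieldType) (p n : nat) (zeta : algC).
Hypotheses (pcharF : p \in [pchar F]) (cardF : #|F| = (p ^ n)%N).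
Hypotheses (zeta_prim : p.-primitive_root zeta) (n_gt0 : (0 < n)%N).

Let p_prime : prime p := pcharf_prime pcharF.

Definition trchar (x : F) : algC := addchar zeta (@abs_trace F p n x).

Lemma trchar0 : trchar 0 = 1.
Proof. by rewrite /trchar abs_trace0 // addchar0. Qed.

Lemma trcharD x y : trchar (x + y) = trchar x * trchar y.
Proof. by rewrite /trchar abs_traceD // addcharD. Qed.

Lemma trcharZ a x : trchar (Fp_embed a * x) = addchar zeta (a * @abs_trace F p n x).
Proof. by rewrite /trchar abs_traceZ. Qed.

Lemma sum_trchar_mul z : \sum_b trchar (b * z) = if z == 0 then #|F|%:R else 0.
Proof.
have [->|z_neq0] := eqVneq z 0.
  by under eq_bigr do rewrite mulr0 trchar0; rewrite sumr_const.
have [w trw_neq0] := abs_trace_neq0 pcharF cardF n_gt0.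
apply: (sum_mul_char_eq0 (c := w / z)) => [a b|]; first by rewrite mulrDl trcharD.
by rewrite divfK // /trchar addchar_eq1.
Qed.

End TraceCharacter.

Section PowerTwist.
Variables (p : nat) (l : int).
Hypotheses (p_prime : prime p) (l_coprime : gcdz (l - 1) (p.-1)%:Z = 1%N).

(* [pow_twist a * f (a x) = a * f x] for [f] homogeneous of degree [l]; on nonzero [a] it
   is [a ^ (1 - l)], a permutation because [gcd (l - 1, p - 1) = 1]. *)
Definition pow_twist (a : 'F_p) : 'F_p := a / a ^ l.

Lemma pow_twist_eq0 a : (pow_twist a == 0) = (a == 0).
Proof. by rewrite mulf_eq0 invr_eq0 expfz_eq0; case: (a == 0); rewrite ?andbF ?orbT. Qed.

Lemma pow_twistE a : a != 0 -> pow_twist a = a ^ (1 - l).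
Proof. by move=> a_neq0; rewrite /pow_twist invr_expz exprzDr ?unitfE. Qed.

Lemma pow_twist_inj : injective pow_twist.
Proof.
move=> a b eq_ab; have eq0_ab : (a == 0) = (b == 0) by rewrite -pow_twist_eq0 eq_ab pow_twist_eq0.
have [a0|a_neq0] := eqVneq a 0; first by move: eq0_ab; rewrite a0 eqxx => /esym/eqP.
have b_neq0 : b != 0 by rewrite -eq0_ab.
pose u := a / b; have u_neq0 : u != 0 by rewrite mulf_neq0 ?invr_eq0.
have u_unit : u \is a GRing.unit by rewrite unitfE.
have u_1l : u ^ (1 - l) = 1.
  rewrite exprzMl ?unitfE ?invr_eq0 // -expfV -!pow_twistE // eq_ab mulfV //.
  by rewrite pow_twist_eq0.
have u_p1 : u ^ (p.-1)%:Z = 1.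
  rewrite -exprnP; apply: (mulIf u_neq0).
  by rewrite mul1r -exprSr prednK ?prime_gt0 // -[X in _ ^+ X](card_Fp p_prime) expf_card.
have [s [t st]] := Bezoutz (l - 1) (p.-1)%:Z.
have u_l1 : u ^ (l - 1) = 1 by rewrite -opprB -invr_expz u_1l invr1.
have : u = 1.
  rewrite -[LHS]expr1z -[X in u ^ X = _]l_coprime -st exprzDr // [s * _]mulrC [t * _]mulrC.
  by rewrite -!exprz_exp u_l1 u_p1 !exp1rz mulr1.
by move/divr1_eq.
Qed.

End PowerTwist.

Lemma pchar_natr2_neq0 (R : idomainType) p : p \in [pchar R] -> p != 2 -> 2%:R != 0 :> R.
Proof.
move=> pcharR p_neq2.
by rewrite -(dvdn_pcharf pcharR) dvdn_prime2 // (pcharf_prime pcharR).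
Qed.

Lemma addrr_eq0 (R : idomainType) (x : R) : 2%:R != 0 :> R -> (x + x == 0) = (x == 0).
Proof. by move=> two_neq0; rewrite -mulr2n -mulr_natr mulf_eq0 (negPf two_neq0) orbF. Qed.

(* Pairing [x] with [- x] by comparing their ranks in [enum G]. *)
Lemma even_card_oppr_closed (G : finZmodType) (S : {set G}) :
  (forall x : G, x + x = 0 -> x = 0) -> (forall x, x \in S -> - x \in S) -> 0 \notin S ->
  ~~ odd #|S|.
Proof.
move=> two_torsion_free SN S0.
pose B := [set x : G | (enum_rank x < enum_rank (- x))%N].
have SB : S :\: B = [set - x | x in S :&: B].
  rewrite (can2_imset_pre _ opprK opprK); apply/setP => y; rewrite !inE opprK.
  case yS: (y \in S); last first.
    by rewrite andbF; case nyS: (- y \in S) => //; have := SN _ nyS; rewrite opprK yS.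
  have y_neq0 : y != 0 by apply: contraNneq S0 => <-.
  have y_neq_opp : y != - y.
    by apply: contra_neq y_neq0 => y_opp; apply: two_torsion_free; rewrite {2}y_opp subrr.
  rewrite SN //= andbT -leqNgt leq_eqVlt val_eqE (inj_eq enum_rank_inj).
  by rewrite eq_sym (negPf y_neq_opp).
have := cardsID B S; rewrite SB card_imset => [<-|]; last exact: oppr_inj.
by rewrite addnn odd_double.
Qed.

Definition diff_count (G : finZmodType) (D : {set G}) (g : G) : nat :=
  #|[set xy : G * G | [&& xy.1 \in D, xy.2 \in D & xy.1 - xy.2 == g]]|.

Section CayleyGraph.
Variables (G : finZmodType) (D : {set G}).
Hypothesis DN : forall x, x \in D -> - x \in D.

Lemma cayley_sym : symmetric (cayley D).
Proof. by move=> x y; apply/idP/idP => /DN; rewrite opprB. Qed.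

Lemma card_cayley_nbhd x : #|[set y | cayley D x y]| = #|D|.
Proof.
have -> : [set y | cayley D x y] = (fun y => x - y) @^-1: D by apply/setP => y; rewrite !inE.
by rewrite card_preimset // => y z /addrI /oppr_inj.
Qed.

(* Common neighbours [z] of [x] and [y] correspond to pairs [(x - z, y - z)]. *)
Lemma card_cayley_common_nbhd x y :
  #|[set z | cayley D x z && cayley D y z]| = diff_count D (x - y).
Proof.
have pair_inj : injective (fun z => (x - z, y - z)) by move=> z1 z2 [] /addrI /oppr_inj.
rewrite /diff_count -(card_imset _ pair_inj); apply: eq_card => -[a b].
rewrite inE /=; apply/imsetP/and3P => [[z] |[aD bD /eqP ab]].
  by rewrite inE /cayley => /andP [xz yz] [-> ->]; rewrite xz yz opprB addrA subrK.
have yxa : y - (x - a) = b by rewrite -(subKr a b) ab !opprB addrCA.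
by exists (x - a); rewrite ?inE /cayley subKr yxa ?aD.
Qed.

Lemma cayley_srg_of_pds v d lam mu :
  is_PDS D v d lam mu -> is_SRG (cayley D) v d lam mu.
Proof.
case=> cardG cardD D0 diffD; split=> // [|x|x|x y x_neq_y].
- exact: cayley_sym.
- by rewrite /cayley subrr (negPf D0).
- by rewrite card_cayley_nbhd.
- by rewrite card_cayley_common_nbhd diffD ?subr_eq0.
Qed.

End CayleyGraph.

Section PartialDifferenceSet.
Variables (p k : nat) (F : finFieldType) (zeta : algC) (f : F -> 'F_p).
Variables (eps l : int) (fstar : F -> 'F_p).
Hypotheses (pcharF : p \in [pchar F]) (cardF : #|F| = (p ^ (2 * k))%N).
Hypotheses (zeta_prim : p.-primitive_root zeta) (p_odd : odd p).
Hypotheses (f0 : f 0 = 0) (fN : forall x, f (- x) = f x).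
Hypothesis l_coprime : gcdz (l - 1) (p.-1)%:Z = 1%N.
Hypothesis f_hom : forall (a : 'F_p) (x : F), f ((val a)%:R * x) = a ^ l * f x.
Hypothesis eps_sign : eps = 1 \/ eps = -1.
Hypothesis walshE : forall b : F,
  @walsh F p (2 * k) zeta f b = eps%:~R * (p ^ k)%:R * zeta ^+ val (fstar b).

Local Notation n := (2 * k)%N.
Local Notation tr := (@abs_trace F p n).
Local Notation e := (addchar zeta).
Local Notation psi := (@trchar F p n zeta).
Local Notation P := (p%:R : algC).
Local Notation q := ((p ^ (k - 1))%:R : algC).
Local Notation E := (eps%:~R : algC).

Let p_prime : prime p := pcharf_prime pcharF.

Let P_neq0 : P != 0. Proof. by rewrite pnatr_eq0 -lt0n prime_gt0. Qed.

Let cardF_neq0 : #|F|%:R != 0 :> algC.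
Proof. by rewrite pnatr_eq0 -lt0n (cardD1 0) inE. Qed.

Lemma k_gt0 : (0 < k)%N.
Proof.
have F_gt1 : (1 < #|F|)%N by apply/card_gt1P; exists 0, 1; rewrite !inE eq_sym oner_neq0.
by rewrite lt0n; apply: contraTneq F_gt1 => k0; rewrite cardF k0.
Qed.

Let n_gt0 : (0 < n)%N. Proof. by rewrite muln_gt0 k_gt0. Qed.

Lemma expn_pred : (p ^ k = p * p ^ (k - 1))%N.
Proof. by rewrite -expnS subn1 prednK // k_gt0. Qed.

Lemma natr_pk : (p ^ k)%:R = P * q :> algC.
Proof. by rewrite expn_pred natrM. Qed.

Lemma natr_cardF : #|F|%:R = (P * q) ^+ 2 :> algC.
Proof. by rewrite cardF mulnC expnM natrX natr_pk. Qed.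

Lemma walsh_galois a b : a != 0 ->
  \sum_x e (a * (f x + tr (b * x))) = E * (p ^ k)%:R * e (a * fstar b).
Proof.
move=> a_neq0; have [s sE] := addchar_galois p_prime zeta_prim a_neq0.
have := congr1 s (walshE b); rewrite rmorph_sum !rmorphM rmorph_int rmorph_nat.
by rewrite -[zeta ^+ _]/(e _) sE => <-; apply: eq_bigr => x _; rewrite -sE.
Qed.

Lemma sum_addchar_mulf a : a != 0 -> \sum_x e (a * f x) = E * (p ^ k)%:R * e (a * fstar 0).
Proof.
move=> a_neq0; rewrite -walsh_galois //.
by apply: eq_bigr => x _; rewrite mul0r abs_trace0 // addr0.
Qed.

Lemma card_level_set j :
  P * #|[set x | f x == j]|%:R =
    #|F|%:R + E * (p ^ k)%:R * (if fstar 0 == j then P - 1 else -1).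
Proof.
rewrite [_%:R]/(1 *+ _) -sumr_const big_mkcond mulr_sumr /=.
transitivity (\sum_x \sum_(y : 'F_p) e (y * (f x - j))).
  apply: eq_bigr => x _; rewrite sum_addchar_mul // inE subr_eq0.
  by case: eqP; rewrite ?mulr1 ?mulr0.
rewrite exchange_big (bigD1 0) //=.
under eq_bigr do rewrite mul0r addchar0.
rewrite sumr_const -[fstar 0 == j]subr_eq0 -(sum_addchar_mul_neq0 p_prime zeta_prim) mulr_sumr.
congr (_ + _).
apply: eq_bigr => y y_neq0.
under eq_bigr do rewrite mulrBr (addcharD p_prime zeta_prim).
by rewrite -mulr_suml sum_addchar_mulf // -mulrA -(addcharD p_prime zeta_prim) mulrBr.
Qed.

Local Notation D := [set x : F | (x != 0) && (f x == 0)].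

Lemma oppr_D x : x \in D -> - x \in D.
Proof. by rewrite !inE oppr_eq0 fN. Qed.

Lemma D0 : 0 \notin D. Proof. by rewrite inE eqxx. Qed.

Lemma level_set0 : [set x | f x == 0] = 0 |: D.
Proof. by apply/setP => x; rewrite !inE; case: (eqVneq x 0) => [->|]; rewrite ?f0. Qed.

(* The level sets of [f] are symmetric, so away from [0] they have even size. *)
Lemma fstar0 : fstar 0 = 0.
Proof.
apply/eqP/contraT => fstar0_neq0.
have p_neq2 : p != 2 by apply: contraTneq p_odd => ->.
pose j := fstar 0 + fstar 0.
have j_neq0 : j != 0 by rewrite addrr_eq0 // (pchar_natr2_neq0 (pchar_Fp p_prime)).
have fstar0_neq_j : fstar 0 != j by rewrite /j eq_sym -subr_eq0 addrK.
have card_level_j : #|[set x | f x == j]| = #|[set x | f x == 0]|.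
  apply/eqP; rewrite -(eqr_nat algC) -(inj_eq (mulfI P_neq0)) !card_level_set.
  by rewrite (negPf fstar0_neq_j) (negPf fstar0_neq0).
have F_two_torsion_free (x : F) : x + x = 0 -> x = 0.
  by move/eqP; rewrite addrr_eq0 ?(pchar_natr2_neq0 pcharF) // => /eqP.
have : ~~ odd #|[set x | f x == j]|.
  by apply: even_card_oppr_closed => [//|x|]; rewrite !inE ?fN // f0 eq_sym.
have D_even : ~~ odd #|D|.
  by apply: even_card_oppr_closed D0 => // x /oppr_D.
by rewrite card_level_j level_set0 cardsU1 inE eqxx /= add0n D_even.
Qed.

Definition hatD (b : F) : algC := \sum_(x in D) psi (b * x).

(* Reindexing by [y := pow_twist a] and [x := a x] makes the [a]-th term the Galois
   conjugate of [W_f b]. *)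
Lemma sum_twisted_walsh b : \sum_(y | y != 0) \sum_x e (y * f x) * psi (b * x) =
  E * (p ^ k)%:R * (if fstar b == 0 then P - 1 else -1).
Proof.
rewrite (reindex_inj (pow_twist_inj p_prime l_coprime)) /=.
rewrite (eq_bigl (fun a => a != 0)) => [|a]; last by rewrite /= pow_twist_eq0.
rewrite -(sum_addchar_mul_neq0 p_prime zeta_prim) mulr_sumr.
apply: eq_bigr => a a_neq0; rewrite -walsh_galois //.
have embed_a_neq0 : Fp_embed a != 0 :> F by rewrite (Fp_embed_eq0 pcharF).
rewrite (reindex_inj (mulfI embed_a_neq0)) /=; apply: eq_bigr => x _.
rewrite f_hom mulrA /pow_twist divfK ?expfz_neq0 // mulrCA trcharZ //.
by rewrite -(addcharD p_prime zeta_prim) mulrDr.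
Qed.

Lemma hatD_level b : P * (1 + hatD b) =
  (if b == 0 then #|F|%:R else 0) + E * (p ^ k)%:R * (if fstar b == 0 then P - 1 else -1).
Proof.
have -> : 1 + hatD b = \sum_(x | f x == 0) psi (b * x).
  rewrite [RHS](bigD1 0) ?f0 //= mulr0 trchar0 //; congr (1 + _).
  by apply: eq_bigl => x; rewrite inE andbC.
rewrite big_mkcond mulr_sumr -sum_twisted_walsh.
transitivity (\sum_x \sum_(y : 'F_p) e (y * f x) * psi (b * x)).
  apply: eq_bigr => x _; rewrite -mulr_suml sum_addchar_mul //.
  by case: (f x == 0); rewrite ?mulr0 ?mul0r.
rewrite exchange_big (bigD1 0) //=; congr (_ + _).
under eq_bigr do rewrite mul0r addchar0 mul1r mulrC.
exact: sum_trchar_mul.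
Qed.

Lemma hatD0 : hatD 0 = #|D|%:R.
Proof. by rewrite /hatD; under eq_bigr do rewrite mul0r trchar0 //; rewrite sumr_const. Qed.

Lemma natr_cardD : #|D|%:R = (P * q - E) * (q + E).
Proof.
apply: (mulfI P_neq0); apply: (addrI P); rewrite -[P in P + _]mulr1 -mulrDr.
rewrite -hatD0 hatD_level fstar0 !eqxx natr_cardF natr_pk.
by case: eps_sign => ->; ring.
Qed.

Local Notation r := (E * q * (P - 1) - 1).
Local Notation s := (- (E * q) - 1).

Lemma hatD_two_values b : b != 0 -> hatD b = r \/ hatD b = s.
Proof.
move=> b_neq0; have := hatD_level b; rewrite (negPf b_neq0) add0r natr_pk.
by case: (fstar b == 0) => hatD_b; [left|right]; apply: (mulfI P_neq0); apply: (addrI P);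
  rewrite -[P in P + _]mulr1 -mulrDr hatD_b; ring.
Qed.

Lemma hatD_sq b : b != 0 -> hatD b ^+ 2 = (r + s) * hatD b - r * s.
Proof. by case/hatD_two_values => ->; ring. Qed.

Lemma hatDN b : hatD (- b) = hatD b.
Proof.
rewrite /hatD (reindex_inj oppr_inj) /=.
by apply: eq_big => [x|x _]; rewrite ?mulrNN // !inE oppr_eq0 fN.
Qed.

Lemma natr_diff_count g :
  (diff_count D g)%:R = \sum_(x in D) \sum_(y in D) ((x - y == g)%:R : algC).
Proof.
rewrite /diff_count -sumr_const pair_big_dep /= [RHS]big_mkcond [LHS]big_mkcond /=.
apply: eq_bigr => -[x y] _; rewrite in_set /=.
by case: (x \in D); case: (y \in D); case: (x - y == g).
Qed.

Lemma diff_count_fourier g :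
  #|F|%:R * (diff_count D g)%:R = \sum_b hatD b ^+ 2 * psi (b * - g).
Proof.
rewrite natr_diff_count mulr_sumr.
transitivity (\sum_(x in D) \sum_(y in D) \sum_b psi (b * x) * psi (- b * y) * psi (b * - g)).
  apply: eq_bigr => x _; rewrite mulr_sumr; apply: eq_bigr => y _.
  transitivity (\sum_b psi (b * (x - y - g))).
    by rewrite sum_trchar_mul // subr_eq0; case: eqP; rewrite ?mulr1 ?mulr0.
  by apply: eq_bigr => b _; rewrite !mulrDr mulrN -mulNr !trcharD.
rewrite (eq_bigr _ (fun x _ => exchange_big _ _ _ _ _ _)) exchange_big /=.
apply: eq_bigr => b _; rewrite expr2 -{2}hatDN big_distrlr mulr_suml /=.
by apply: eq_bigr => x _; rewrite mulr_suml.
Qed.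

Lemma sum_hatD_trchar g : \sum_b hatD b * psi (b * - g) = #|F|%:R * (g \in D)%:R.
Proof.
rewrite /hatD; under eq_bigr do rewrite mulr_suml.
rewrite exchange_big /=.
under eq_bigr => x _ do under eq_bigr => b _ do rewrite -trcharD // -mulrDr.
under eq_bigr do rewrite sum_trchar_mul // subr_eq0.
have [gD|gND] := boolP (g \in D).
  rewrite (bigD1 g) //= eqxx big1 ?addr0 ?mulr1 // => x /andP [_ /negPf -> //].
by rewrite big1 ?mulr0 // => x xD; case: eqP xD => // ->; rewrite (negPf gND).
Qed.

Lemma diff_count_eq g : g != 0 ->
  #|F|%:R * (diff_count D g)%:R =
    #|D|%:R ^+ 2 + (r + s) * (#|F|%:R * (g \in D)%:R - #|D|%:R) + r * s.
Proof.
move=> g_neq0; rewrite diff_count_fourier (bigD1 0) //= hatD0 mul0r trchar0 // mulr1.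
rewrite (eq_bigr (fun b => ((r + s) * hatD b - r * s) * psi (b * - g))); last first.
  by move=> b /hatD_sq ->.
have -> : \sum_(b | b != 0) ((r + s) * hatD b - r * s) * psi (b * - g) =
    (r + s) * \sum_(b | b != 0) hatD b * psi (b * - g) - r * s * \sum_(b | b != 0) psi (b * - g).
  by rewrite !mulr_sumr -sumrB; apply: eq_bigr => b _; ring.
have -> : \sum_(b | b != 0) hatD b * psi (b * - g) = #|F|%:R * (g \in D)%:R - #|D|%:R.
  by rewrite -sum_hatD_trchar [in RHS](bigD1 0) //= hatD0 mul0r trchar0 // mulr1 addrC addrK.
have -> : \sum_(b | b != 0) psi (b * - g) = -1.
  have := sum_trchar_mul pcharF cardF zeta_prim n_gt0 (- g).
  rewrite oppr_eq0 (negPf g_neq0) (bigD1 0) //= mul0r trchar0 //.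
  by move/eqP; rewrite addrC addr_eq0 => /eqP.
by rewrite mulrN1 opprK addrA.
Qed.

Local Notation d := (((p ^ k)%N%:Z - eps) * ((p ^ (k - 1))%N%:Z + eps)).
Local Notation lam := (((p ^ (k - 1))%N%:Z + eps) ^+ 2
  - 3%:Z * eps * ((p ^ (k - 1))%N%:Z + eps) + eps * (p ^ k)%N%:Z).
Local Notation mu := (((p ^ (k - 1))%N%:Z + eps) * (p ^ (k - 1))%N%:Z).

Lemma card_D : #|D|%:Z = d.
Proof.
apply: (@intr_inj algC); change (#|D|%:R = d%:~R :> algC).
by rewrite natr_cardD expn_pred; ring.
Qed.

Lemma diff_countE g : g != 0 -> (diff_count D g)%:Z = if g \in D then lam else mu.
Proof.
move=> g_neq0; apply: (@intr_inj algC); apply: (mulfI cardF_neq0).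
change (#|F|%:R * (diff_count D g)%:R = #|F|%:R * (if g \in D then lam else mu)%:~R :> algC).
rewrite diff_count_eq // natr_cardD natr_cardF expn_pred.
by case: (g \in D); case: eps_sign => -> /=; ring.
Qed.

Lemma is_PDS_zero_set : is_PDS D (p ^ (2 * k))%N%:Z d lam mu.
Proof. by split; [rewrite cardF | exact: card_D | exact: D0 | exact: diff_countE]. Qed.

End PartialDifferenceSet.

Theorem theorem1 (p k : nat) (F : finFieldType) (zeta : algC)
  (f : F -> 'F_p) (eps : int) :
  p \in [pchar F] -> #|F| = (p ^ (2 * k))%N ->
  p.-primitive_root zeta ->
  @conditionA F p k zeta f eps ->
  let D := [set x : F | (x != 0) && (f x == 0)] in
  let v : int := (p ^ (2 * k))%N%:Z in
  let d : int := ((p ^ k)%N%:Z - eps) * ((p ^ (k - 1))%N%:Z + eps) in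
  let lam : int := ((p ^ (k - 1))%N%:Z + eps) ^+ 2
                   - 3%:Z * eps * ((p ^ (k - 1))%N%:Z + eps) + eps * (p ^ k)%N%:Z in
  let mu : int := ((p ^ (k - 1))%N%:Z + eps) * (p ^ (k - 1))%N%:Z in
  @is_PDS F D v d lam mu /\ @is_SRG F (@cayley F D) v d lam mu.
Proof.
move=> pcharF cardF zeta_prim.
case=> _ [p_odd [f0 [fN [[l [l_coprime f_hom]] [eps_sign [fstar walshE]]]]]] D v d lam mu.
have D_pds : is_PDS D v d lam mu.
  exact: is_PDS_zero_set pcharF cardF zeta_prim p_odd f0 fN l_coprime f_hom eps_sign walshE.
split=> //; apply: cayley_srg_of_pds D_pds => x; exact: oppr_D.
Qed.
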